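(* Let $\Gamma$ and $G$ be finite nilpotent groups of order $n$, with Sylow $p$-subgroups $\Gamma_p$ and $G_p$, so that $\Gamma=\prod_{p\mid n}\Gamma_p$ and $\mathrm{Hol}(G)=\prod_{p\mid n}\mathrm{Hol}(G_p)$. Let $\beta:\Gamma\to\mathrm{Hol}(G)$ be a homomorphism, and for primes $p,q\mid n$ let $\beta_{pq}=\pi_q\circ\beta\circ\iota_p:\Gamma_p\to\mathrm{Hol}(G_q)$, where $\iota_p:\Gamma_p\to\Gamma$ is the inclusion and $\pi_q:\mathrm{Hol}(G)\to\mathrm{Hol}(G_q)$ is the projection from the direct product decomposition. Then $\beta$ is a regular embedding if and only if $\beta_{pp}:\Gamma_p\to\mathrm{Hol}(G_p)$ is a regular embedding for each prime $p\mid n$.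
   Context: $\mathrm{Hol}(G)=\rho(G)\cdot\mathrm{Aut}(G)\subseteq\mathrm{Perm}(G)$ with $\rho(g)(x)=xg^{-1}$. Since the Sylow subgroups of a nilpotent $G$ are characteristic, $\mathrm{Aut}(G)=\prod_p\mathrm{Aut}(G_p)$ and $\mathrm{Hol}(G)=\prod_p \mathrm{Hol}(G_p)$, with $\mathrm{Hol}(G_p)$ acting on the factor $G_p$ of $G=\prod_p G_p$. A homomorphism $\beta:\Gamma\to\mathrm{Hol}(G)$ is a regular embedding if it is injective and its image acts regularly (simply transitively) on $G$. *)

From mathcomp Require Import all_boot all_fingroup all_solvable.
Set Implicit Arguments. Unset Strict Implicit. Unset Printing Implicit Defensive.
Import GroupScope.
Local Open Scope group_scope.

Section Holomorph.
Variable hT : finGroupType.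

Definition hol_rho (G : {set hT}) (g : hT) : {perm hT} :=
  restr_perm G (actperm 'R g^-1).

Definition Hol (G : {set hT}) : {set {perm hT}} :=
  (hol_rho G @: G) * Aut G.

(* The projection pi_q : Hol(G) -> Hol(G_q) coming from G = prod_p G_p:
   pi_q(h) acts on G_q by y |-> q-component of h(y) (identity off G_q).
   For h in Hol(G) this function is a permutation; otherwise default 1. *)
Definition hol_proj_fun (q : nat) (Gq : {set hT}) (h : {perm hT}) : hT -> hT :=
  fun y => if y \in Gq then (h y).`_q else y.

Definition hol_proj (q : nat) (Gq : {set hT}) (h : {perm hT}) : {perm hT} :=
  odflt 1 [pick s : {perm hT} | [forall y, s y == hol_proj_fun q Gq h y]].

Definition acts_regularly (S : {set {perm hT}}) (X : {set hT}) : Prop :=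
  {in X &, forall x y, exists! s, s \in S /\ s x = y}.

Definition regular_embedding (gT : finGroupType) (D : {set gT}) (X : {set hT})
    (f : gT -> {perm hT}) : Prop :=
  [/\ {in D &, {morph f : x y / x * y}}, f @: D \subset Hol X,
      {in D &, injective f} & acts_regularly (f @: D) X].

End Holomorph.

(* Since G is nilpotent, G = G_p x G_p' so y |-> y_p is multiplicative on G; as every
   element of Hol(G) has the form y |-> a(y) c with a in Aut(G), the map pi_p is a
   homomorphism Hol(G) -> Hol(G_p) and pi_p(h)(1) = h(1)_p.  Because orders agree,
   a homomorphism into a holomorph is a regular embedding as soon as the orbit of 1
   is everything and the stabiliser of 1 is trivial.  If pi_p o beta moves 1 onto
   all of G_p, the stabiliser of 1 in Gamma has index |G_p| = |Gamma|_p, so it is a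
   p'-group.  Forwards, it then meets Gamma_p trivially; backwards, an element fixing
   1 under beta fixes 1 under every pi_p o beta, so it is a p'-element for every
   prime p dividing n, i.e. it is trivial. *)
From mathcomp Require Import all_boot all_fingroup all_solvable.
Set Implicit Arguments. Unset Strict Implicit. Unset Printing Implicit Defensive.
Import GroupScope.
Local Open Scope group_scope.

Lemma mem_constt (gT : finGroupType) (G : {group gT}) (pi : nat_pred) x :
  x \in G -> x.`_pi \in G.
Proof. by move=> Gx; rewrite (subsetP _ _ (cycle_constt pi x)) ?cycle_subG. Qed.

Lemma pcore_constt (gT : finGroupType) (G : {group gT}) (pi : nat_pred) x :
  x \in 'O_pi(G) -> x.`_pi = x.
Proof. by move=> Ox; rewrite constt_p_elt // (mem_p_elt (pcore_pgroup pi G)). Qed.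

Section NilpotentConstituents.
Variables (gT : finGroupType) (G : {group gT}) (pi : nat_pred).
Hypothesis nilG : nilpotent G.

Lemma mem_pcore_nil x : x \in G -> (x \in 'O_pi(G)) = pi.-elt x.
Proof. exact: mem_normal_Hall (nilpotent_pcore_Hall pi nilG) (pcore_normal _ _). Qed.

Lemma constt_pcore_nil x : x \in G -> x.`_pi \in 'O_pi(G).
Proof. by move=> Gx; rewrite mem_pcore_nil ?mem_constt ?p_elt_constt. Qed.

End NilpotentConstituents.

Lemma nil_consttM (gT : finGroupType) (G : {group gT}) (pi : nat_pred) x y :
  nilpotent G -> x \in G -> y \in G -> (x * y).`_pi = x.`_pi * y.`_pi.
Proof.
move=> nilG Gx Gy; set P := 'O_pi(G); set Q := 'O_pi^'(G).
have [_ _ cPQ _] := dprodP (nilpotent_pcoreC pi nilG).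
have xP := constt_pcore_nil pi nilG Gx; have yP := constt_pcore_nil pi nilG Gy.
have xQ := constt_pcore_nil pi^' nilG Gx; have yQ := constt_pcore_nil pi^' nilG Gy.
have cPQM u v : u \in P -> v \in Q -> commute u v.
  by move=> Pu Qv; apply: commute_sym; apply: (centP (subsetP cPQ v Qv)).
have splitxy : x * y = (x.`_pi * y.`_pi) * (x.`_pi^' * y.`_pi^').
  rewrite -{1}(consttC pi x) -{1}(consttC pi y).
  by rewrite !mulgA -(mulgA x.`_pi) -(cPQM _ _ yP xQ) !mulgA.
have PxyP : x.`_pi * y.`_pi \in P by rewrite groupM.
have QxyQ : x.`_pi^' * y.`_pi^' \in Q by rewrite groupM.
rewrite splitxy (consttM _ (cPQM _ _ PxyP QxyQ)) (pcore_constt PxyP).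
by rewrite (constt1P (mem_p_elt (pcore_pgroup _ G) QxyQ)) mulg1.
Qed.

Section Holomorph.
Variables (hT : finGroupType) (G : {group hT}).

Lemma hol_rhoE g y : g \in G -> y \in G -> hol_rho G g y = y * g^-1.
Proof.
move=> Gg Gy; rewrite /hol_rho restr_permE ?actpermE //.
by apply/astabsP=> x; rewrite /= apermE actpermE /= groupMr ?groupV.
Qed.

Lemma hol_rho_out g y : y \notin G -> hol_rho G g y = y.
Proof. by move=> Gy; rewrite /hol_rho (out_perm (restr_perm_on _ _)). Qed.

Lemma HolP h : h \in Hol G ->
  exists2 a, a \in Aut G & exists2 c, c \in G & {in G, forall y, h y = a y * c}.
Proof.
case/mulsgP=> _ a /imsetP[g Gg ->] Aa ->; exists a => //.
exists (a g^-1); first by rewrite Aut_closed ?groupV.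
by move=> y Gy; rewrite permM hol_rhoE // -(autmE Aa) morphM ?groupV.
Qed.

Lemma Hol_closed h y : h \in Hol G -> y \in G -> h y \in G.
Proof. by case/HolP=> a Aa [c Gc hE] Gy; rewrite hE // groupM ?Aut_closed. Qed.

End Holomorph.

Section HolomorphProjection.
Variables (hT : finGroupType) (G : {group hT}) (p : nat).
Hypothesis nilG : nilpotent G.
Local Notation Gp := 'O_p(G).
Local Notation pi_p := (hol_proj p Gp).

Lemma Aut_pcore_nil a x : a \in Aut G -> (a x \in Gp) = (x \in Gp).
Proof.
move=> Aa; have [Gx | nGx] := boolP (x \in G); last by rewrite (out_Aut Aa).
rewrite !(mem_pcore_nil p nilG) ?Aut_closed // /p_elt.
by rewrite -{1}(autmE Aa) (order_injm (injm_autm Aa) Gx).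
Qed.

Lemma Hol_constt h : h \in Hol G ->
  exists2 a, a \in Aut G & exists2 c, c \in G &
    {in G, forall y, (h y).`_p = a y.`_p * c.`_p}.
Proof.
case/HolP=> a Aa [c Gc hE]; exists a => //; exists c => // y Gy.
by rewrite hE // (nil_consttM p nilG) ?Aut_closed // -(autmE Aa) morph_constt.
Qed.

Lemma Hol_constt_id h y : h \in Hol G -> y \in G -> (h y).`_p = (h y.`_p).`_p.
Proof.
case/Hol_constt=> a Aa [c Gc hE] Gy.
by rewrite !hE ?mem_constt // (pcore_constt (constt_pcore_nil p nilG Gy)).
Qed.

Lemma hol_proj_fun_pcore h y : h \in Hol G -> y \in Gp -> hol_proj_fun p Gp h y \in Gp.
Proof.
move=> Hh Gpy; rewrite /hol_proj_fun Gpy (constt_pcore_nil p nilG) ?Hol_closed //.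
exact: subsetP (pcore_sub _ _) y Gpy.
Qed.

Lemma hol_proj_fun_inj h : h \in Hol G -> injective (hol_proj_fun p Gp h).
Proof.
move=> Hh y z; have [a Aa [c Gc hE]] := Hol_constt Hh.
have sGpG := subsetP (pcore_sub p G).
have := hol_proj_fun_pcore Hh; rewrite /hol_proj_fun.
case Gpy: (y \in Gp); case Gpz: (z \in Gp) => GpP //.
- by rewrite !hE ?sGpG // (pcore_constt Gpy) (pcore_constt Gpz) => /mulIg /perm_inj.
- by move=> yz; have := GpP y Gpy; rewrite Gpy yz Gpz.
- by move=> yz; have := GpP z Gpz; rewrite Gpz -yz Gpy.
Qed.

Lemma hol_projE h : h \in Hol G -> pi_p h =1 hol_proj_fun p Gp h.
Proof.
move=> Hh y; rewrite /hol_proj; case: pickP => [s /forallP/(_ y)/eqP // | none].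
have /negP[] := none (perm (hol_proj_fun_inj Hh)).
by apply/forallP=> z; rewrite permE.
Qed.

Lemma hol_proj1 h : h \in Hol G -> pi_p h 1 = (h 1).`_p.
Proof. by move=> Hh; rewrite hol_projE // /hol_proj_fun group1. Qed.

Lemma hol_projM h k : h \in Hol G -> k \in Hol G -> h * k \in Hol G ->
  pi_p (h * k) = pi_p h * pi_p k.
Proof.
move=> Hh Hk Hhk; apply/permP=> y; rewrite permM !hol_projE //.
have Gy := subsetP (pcore_sub p G) y; rewrite /hol_proj_fun.
case Gpy: (y \in Gp); last by rewrite Gpy.
have := hol_proj_fun_pcore Hh Gpy.
by rewrite /hol_proj_fun Gpy => ->; rewrite permM Hol_constt_id ?Hol_closed ?Gy.
Qed.

Lemma hol_proj_Hol h : h \in Hol G -> pi_p h \in Hol Gp.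
Proof.
move=> Hh; have [a Aa [c Gc hE]] := Hol_constt Hh.
have sGpG := subsetP (pcore_sub p G).
have c'Gp : a^-1 c.`_p \in Gp by rewrite Aut_pcore_nil ?groupV ?(constt_pcore_nil p nilG).
suff -> : pi_p h = hol_rho Gp (a^-1 c.`_p)^-1 * restr_perm Gp a.
  by rewrite mem_mulg ?imset_f ?groupV ?(Aut_restr_perm (pcore_sub _ _) Aa).
apply/permP=> y; rewrite hol_projE // permM /hol_proj_fun.
case Gpy: (y \in Gp); last first.
  by rewrite hol_rho_out ?Gpy // (out_perm (restr_perm_on _ _)) ?Gpy.
have nGpa : a \in 'N(Gp | 'P) by apply/astabsP=> x; rewrite /= apermE Aut_pcore_nil.
rewrite hol_rhoE ?groupV // restr_permE ?groupM ?groupV // invgK.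
by rewrite hE ?sGpG // (pcore_constt Gpy) -(autmE Aa) morphM ?sGpG //= autmE permKV.
Qed.

End HolomorphProjection.

Section RegularEmbedding.
Variables (gT hT : finGroupType) (D : {group gT}) (X : {group hT}).
Variable f : gT -> {perm hT}.

Lemma regular_embedding_orbit1 : regular_embedding D X f ->
  forall x, x \in X -> exists2 d, d \in D & f d 1 = x.
Proof.
case=> _ _ _ regf x Xx.
by have [_ [[/imsetP[d Dd ->] <-] _]] := regf 1 x (group1 _) Xx; exists d.
Qed.

Hypothesis fM : {in D &, {morph f : x y / x * y}}.

Lemma morph_perm1 : f 1 = 1.
Proof. by apply/(mulgI (f 1)); rewrite -fM ?group1 // !mulg1. Qed.

Lemma morph_permV d : d \in D -> f d^-1 = (f d)^-1.
Proof. by move=> Dd; apply/(mulgI (f d)); rewrite -fM ?groupV // !mulgV morph_perm1. Qed.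

(* The orbit map d |-> f d 1 is injective by freeness, hence onto X by counting. *)
Lemma free_regular_embedding : f @: D \subset Hol X -> #|D| = #|X| ->
  (forall d, d \in D -> f d 1 \in X) ->
  (forall d, d \in D -> f d 1 = 1 -> d = 1) -> regular_embedding D X f.
Proof.
move=> fDHol cardDX fD1 free.
have orbit_inj : {in D &, injective (fun d => f d 1)}.
  move=> d e Dd De de; apply/eqP; rewrite eq_mulgV1; apply/eqP/free.
    by rewrite groupM ?groupV.
  by rewrite fM ?groupV // permM de morph_permV // permK.
have orbitE : [set f d 1 | d in D] = X.
  apply/eqP; rewrite eqEcard card_in_imset // cardDX leqnn andbT.
  by apply/subsetP=> _ /imsetP[d Dd ->]; apply: fD1.
split=> // [d e Dd De de | x y]; first by apply: orbit_inj; rewrite /= ?de.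
rewrite -orbitE => /imsetP[d Dd ->] /imsetP[e De ->].
exists (f (d^-1 * e)); split.
  by rewrite imset_f ?groupM ?groupV // fM ?groupV // permM morph_permV // permK.
move=> _ [/imsetP[u Du ->] ude]; congr f; apply: (mulgI d).
by rewrite mulgA mulgV mul1g; apply: orbit_inj; rewrite ?groupM //= fM // permM.
Qed.

End RegularEmbedding.

Lemma p'group_astab1 (aT : finGroupType) (D A : {group aT}) (rT : finType)
    (to : action D rT) x (p : nat) :
  A \subset D -> #|orbit to A x| = (#|A|`_p)%N -> p^'.-group 'C_A[x | to].
Proof.
move=> sAD orbitE; have := card_orbit_in_stab to x sAD.
rewrite orbitE -{2}(partnC p (cardG_gt0 A)) => /eqP.
by rewrite eqn_pmul2l ?part_gt0 // => /eqP stabE; rewrite /pgroup stabE part_pnat.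
Qed.

Lemma p'elt_primes_eq1 (gT : finGroupType) (G : {group gT}) x : x \in G ->
  (forall p, prime p -> p %| #|G| -> p^'.-elt x) -> x = 1.
Proof.
move=> Gx p'x; apply/eqP; rewrite -order_eq1; apply: contraT => ntx.
have x_gt1 : 1 < #[x] by rewrite ltn_neqAle eq_sym ntx order_gt0.
have q_dv_x := pdiv_dvd #[x]; have q_pr := pdiv_prime x_gt1.
have := p'x _ q_pr (dvdn_trans q_dv_x (order_dvdG Gx)).
by rewrite /p_elt p'natE // q_dv_x.
Qed.

Section Projections.
Variables (gT hT : finGroupType) (Gam : {group gT}) (G : {group hT}).
Hypotheses (nilGam : nilpotent Gam) (nilG : nilpotent G) (cardE : #|Gam| = #|G|).
Variable beta : {morphism Gam >-> {perm hT}}.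
Hypothesis betaHol : beta @* Gam \subset Hol G.
Variable p : nat.
Local Notation beta_p := (fun x => hol_proj p 'O_p(G) (beta x)).

Lemma morph_Hol x : x \in Gam -> beta x \in Hol G.
Proof. by move=> Gx; apply: (subsetP betaHol); rewrite mem_morphim. Qed.

Lemma hol_proj_morphM : {in Gam &, {morph beta_p : x y / x * y}}.
Proof.
move=> x y Gx Gy /=; rewrite morphM // hol_projM ?morph_Hol //.
by rewrite -morphM ?morph_Hol ?groupM.
Qed.

Lemma hol_proj_morph1 x : x \in Gam -> beta_p x 1 = (beta x 1).`_p.
Proof. by move=> Gx; rewrite /= hol_proj1 ?morph_Hol. Qed.

Lemma hol_proj_morph1_pcore x : x \in Gam -> beta_p x 1 \in 'O_p(G).
Proof.
by move=> Gx; rewrite hol_proj_morph1 // (constt_pcore_nil p nilG) ?Hol_closed ?morph_Hol.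
Qed.

(* The stabiliser of 1 has index |G_p| = |Gam|_p, so it is a p'-group. *)
Lemma hol_proj_stab1_p'elt :
  (forall z, z \in 'O_p(G) -> exists2 g, g \in Gam & beta_p g 1 = z) ->
  forall g, g \in Gam -> beta_p g 1 = 1 -> p^'.-elt g.
Proof.
move=> onto g Gg g1; pose to := morph_action (Morphism hol_proj_morphM).
have orbitE : orbit to Gam 1 = 'O_p(G).
  apply/eqP; rewrite eqEsubset; apply/andP; split; apply/subsetP => z.
    by case/imsetP=> h Gh ->; rewrite /= mactE hol_proj_morph1_pcore.
  by case/onto=> h Gh <-; apply/imsetP; exists h.
have : p^'.-group 'C_Gam[1 | to].
  apply: p'group_astab1 (subxx _) _.
  by rewrite orbitE (card_Hall (nilpotent_pcore_Hall p nilG)) cardE.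
by move/mem_p_elt; apply; rewrite !inE Gg sub1set inE /= mactE /= g1 eqxx.
Qed.

Lemma regular_embedding_hol_proj : regular_embedding Gam G beta ->
  regular_embedding 'O_p(Gam) 'O_p(G) beta_p.
Proof.
move=> regb; have sOGam := subsetP (pcore_sub p Gam).
apply: free_regular_embedding => [x y Ox Oy | | | d Od | d Od d1].
- exact: hol_proj_morphM (sOGam x Ox) (sOGam y Oy).
- by apply/subsetP=> _ /imsetP[x Ox ->]; apply/hol_proj_Hol/morph_Hol/sOGam.
- by rewrite !(card_Hall (nilpotent_pcore_Hall p _)) ?cardE.
- exact: hol_proj_morph1_pcore (sOGam d Od).
have p'd : p^'.-elt d.
  apply: hol_proj_stab1_p'elt (sOGam d Od) d1 => z Oz.
  have [g Gg gz] := regular_embedding_orbit1 regb (subsetP (pcore_sub _ _) z Oz).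
  by exists g; rewrite // hol_proj_morph1 // gz (pcore_constt Oz).
by apply/eqP; rewrite -order_eq1 (pnat_1 (mem_p_elt (pcore_pgroup _ _) Od) p'd).
Qed.

End Projections.

Lemma regular_embedding_of_hol_proj (gT hT : finGroupType) (Gam : {group gT})
    (G : {group hT}) (nilG : nilpotent G) (cardE : #|Gam| = #|G|)
    (beta : {morphism Gam >-> {perm hT}}) (betaHol : beta @* Gam \subset Hol G) :
  (forall p, prime p -> p %| #|G| ->
     regular_embedding 'O_p(Gam) 'O_p(G) (fun x => hol_proj p 'O_p(G) (beta x))) ->
  regular_embedding Gam G beta.
Proof.
move=> regbp; apply: free_regular_embedding => [x y Gx Gy | | | d Gd | d Gd d1].
- exact: morphM.
- by rewrite -morphimEdom.
- exact: cardE.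
- by rewrite Hol_closed ?morph_Hol.
apply: (p'elt_primes_eq1 Gd) => q q_pr; rewrite cardE => q_dvG.
apply: (hol_proj_stab1_p'elt nilG cardE betaHol _ Gd) => [z Oz | ]; last first.
  by rewrite hol_proj_morph1 // d1 constt1.
have [g Og gz] := regular_embedding_orbit1 (regbp q q_pr q_dvG) Oz.
by exists g => //; apply: subsetP (pcore_sub _ _) g Og.
Qed.

Theorem lemma2p2 (gT hT : finGroupType) (Gam : {group gT}) (G : {group hT})
  (nilGam : nilpotent Gam) (nilG : nilpotent G) (cardE : #|Gam| = #|G|)
  (beta : {morphism Gam >-> {perm hT}}) (betaHol : beta @* Gam \subset Hol G) :
  regular_embedding Gam G beta <->
  (forall p : nat, prime p -> p %| #|G| ->
     regular_embedding 'O_p(Gam) 'O_p(G)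
       (fun x => hol_proj p 'O_p(G) (beta x))).
Proof.
split=> [regb p _ _ | ]; first exact: regular_embedding_hol_proj.
exact: regular_embedding_of_hol_proj.
Qed.
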